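(* Let $x=(\xi,r)\in X^{(n)}$ and $y=(\eta,t)\in X^{(n)}\cap(B^{\mathbb{T}_n}_r(\xi)\times(0,r))$. If $m\ge1$ is such that the chemical distance between $x$ and $y$ in $G^\prime(X^{(n)})$ is larger than $m$, then there exists a toroidal descending chain of points of $X^{(n)}$ starting from $x$ and consisting of more than $m$ points.
   Context: Fix an integer $d\ge2$ and $n\ge1$. $\mathbb{T}_n$ is the torus obtained from $[-n/2,n/2]^d$ by identifying opposite faces, with toroidal distance ${\rm d}_{\mathbb{T}_n}$ and $B^{\mathbb{T}_n}_r(\xi)=\{\eta\in\mathbb{T}_n:{\rm d}_{\mathbb{T}_n}(\xi,\eta)\le r\}$. $X^{(n)}$ is a (realization of a) finite set of points $(\xi,r)\in\mathbb{T}_n\times[0,\infty)$ (in the paper, a Poisson point process of intensity $1$ on $\mathbb{T}_n$ with i.i.d. absolutely continuous marks). $G^\prime(X^{(n)})$ has vertex set $X^{(n)}$ and a directed edge from $(\xi,r)$ to $(\eta,t)$ iff $(\eta,t)\in B^{\mathbb{T}_n}_r(\xi)\times[0,r)$ and there is no $(\zeta,w)\in X^{(n)}\cap(B^{\mathbb{T}_n}_r(\xi)\times(t,r))$ with $\eta\in B^{\mathbb{T}_n}_w(\zeta)$; chemical distance is the minimal number of edges of a path, edges traversable in either direction. Points $x_1=(\xi_1,r_1),\dots,x_m=(\xi_m,r_m)$ form a toroidal descending chain if $r_1>r_2>\dots>r_m$ and $\xi_{i+1}\in B^{\mathbb{T}_n}_{r_i}(\xi_i)$ for all $i\in\{1,\dots,m-1\}$.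 *)

From HB Require Import structures.
From mathcomp Require Import all_boot all_order all_algebra.
From mathcomp Require Import reals.
Set Implicit Arguments. Unset Strict Implicit. Unset Printing Implicit Defensive.
Import Order.TTheory GRing.Theory Num.Theory.
Local Open Scope ring_scope.

Section Defs.
Variables (R : realType) (d : nat).

(* A marked point (xi, r) in T_n x [0,oo): xi is represented by its
   coordinates in the fundamental domain, r is the mark. *)
Definition mpt := ('rV[R]_d * R)%type.

Definition in_fund (n : nat) (xi : 'rV[R]_d) : Prop :=
  forall i : 'I_d, - (n%:R / 2) <= xi ord0 i /\ xi ord0 i < n%:R / 2.

Definition shift_dist (n : nat) (xi eta : 'rV[R]_d) (k : 'I_d -> int) : R :=
  Num.sqrt (\sum_(i < d) (xi ord0 i - eta ord0 i - n%:R * (k i)%:~R) ^+ 2).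

(* eta \in B^{T_n}_r(xi), i.e. d_{T_n}(xi, eta) <= r, where the toroidal
   distance is the quotient distance min_{k in Z^d} |xi - eta - n k|
   (the minimum is attained). *)
Definition in_tball (n : nat) (xi : 'rV[R]_d) (r : R) (eta : 'rV[R]_d) : Prop :=
  exists k : 'I_d -> int, shift_dist n xi eta k <= r.

Definition gedge (n : nat) (X : seq mpt) (x y : mpt) : Prop :=
  [/\ x \in X /\ y \in X,
      in_tball n x.1 x.2 y.1, 0 <= y.2, y.2 < x.2 &
      ~ (exists2 z, z \in X &
           [/\ in_tball n x.1 x.2 z.1, y.2 < z.2, z.2 < x.2 &
               in_tball n z.1 z.2 y.1])].

Fixpoint upath (n : nat) (X : seq mpt) (x : mpt) (p : seq mpt) (y : mpt) : Prop :=
  match p with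
  | [::] => x = y
  | z :: p' => (gedge n X x z \/ gedge n X z x) /\ upath n X z p' y
  end.

Definition chem_dist_gt (n : nat) (X : seq mpt) (x y : mpt) (m : nat) : Prop :=
  ~ (exists p : seq mpt, (size p <= m)%N /\ upath n X x p y).

Fixpoint tdesc_chain (n : nat) (x : mpt) (c : seq mpt) : Prop :=
  match c with
  | [::] => True
  | z :: c' => [/\ z.2 < x.2, in_tball n x.1 x.2 z.1 & tdesc_chain n z c']
  end.

End Defs.

From HB Require Import structures.
From mathcomp Require Import all_boot all_order all_algebra.
From mathcomp Require Import reals.
From Stdlib Require Import Classical.
Import Order.TTheory GRing.Theory Num.Theory.
Local Open Scope ring_scope.

(* If y = (eta, t) lies in the ball of x = (xi, r) and t < r, either x -> y
   is an edge of G'(X) or some z of X with mark strictly between t and r lies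
   in the ball of x and has y in its ball.  Recursing on (x, z) and (z, y),
   each with strictly fewer marks of X in between, yields a directed path
   from x to y.  Such a path is a descending chain; having chemical distance
   greater than m, it must have more than m edges. *)

Lemma count_lt_sub (T : Type) (P Q : pred T) (s : seq T) :
  subpred P Q -> has (predD Q P) s -> (count P s < count Q s)%N.
Proof.
move=> subPQ; elim: s => [|w s IHs] //=.
case/orP => [/andP [nPw Qw] | hasD].
  by rewrite (negbTE nPw) Qw add1n ltnS sub_count.
have [Pw | nPw] := boolP (P w); first by rewrite (subPQ _ Pw) !add1n ltnS IHs.
by rewrite add0n (leq_trans (IHs hasD)) ?leq_addl.
Qed.

Section DirectedPaths.
Context {R : realType} {d : nat} (n : nat) (X : seq (mpt R d)).

Fixpoint dpath (a : mpt R d) (p : seq (mpt R d)) (b : mpt R d) : Prop :=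
  match p with
  | [::] => a = b
  | z :: p' => gedge n X a z /\ dpath z p' b
  end.

Lemma dpath_cat a p z q b : dpath a p z -> dpath z q b -> dpath a (p ++ q) b.
Proof.
by elim: p a => [|w p IHp] a /= => [-> | [edge_aw path_wz] /(IHp _ path_wz)].
Qed.

Lemma dpath_upath a p b : dpath a p b -> upath n X a p b.
Proof. by elim: p a => [|w p IHp] a //= [edge_aw /IHp]; split; first left. Qed.

Lemma dpath_all_mem a p b : dpath a p b -> all (mem X) p.
Proof. by elim: p a => [|w p IHp] a //= [[[_ ->] _ _ _ _] /IHp]. Qed.

Lemma dpath_tdesc_chain a p b : dpath a p b -> tdesc_chain n a p.
Proof. by elim: p a => [|w p IHp] a //= [[_ ball_aw _ lt_wa _] /IHp]. Qed.

Definition marks_between (s t : R) : nat :=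
  count (fun w : mpt R d => (s < w.2) && (w.2 < t)) X.

Lemma marks_between_split {s t z} : z \in X -> s < z.2 -> z.2 < t ->
  (marks_between s z.2 < marks_between s t)%N /\
  (marks_between z.2 t < marks_between s t)%N.
Proof.
move=> Xz lt_sz lt_zt; split; apply: count_lt_sub;
  do ?[by apply/hasP; exists z => //=; rewrite ltxx ?andbF lt_sz lt_zt];
  move=> w /= /andP [lt1 lt2]; apply/andP; split=> //.
- exact: lt_trans lt2 lt_zt.
- exact: lt_trans lt_sz lt1.
Qed.

Lemma not_gedge_intermediate {a b} :
  a \in X -> b \in X -> in_tball n a.1 a.2 b.1 -> 0 <= b.2 -> b.2 < a.2 ->
  ~ gedge n X a b ->
  exists2 z, z \in X &
    [/\ in_tball n a.1 a.2 z.1, b.2 < z.2, z.2 < a.2 & in_tball n z.1 z.2 b.1].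
Proof. by move=> Xa Xb ball_ab ge0b lt_ba not_edge; apply: NNPP => ?; apply: not_edge. Qed.

Lemma exists_dpath {a b} :
  a \in X -> b \in X -> in_tball n a.1 a.2 b.1 -> 0 <= b.2 -> b.2 < a.2 ->
  exists p, dpath a p b.
Proof.
move: (ltnSn (marks_between b.2 a.2)); move: {2}(marks_between _ _).+1 => k.
elim: k a b => [|k IHk] a b // count_ab Xa Xb ball_ab ge0b lt_ba.
have [edge_ab | not_edge] := classic (gedge n X a b); first by exists [:: b].
have [z Xz [ball_az lt_bz lt_za ball_zb]] :=
  not_gedge_intermediate Xa Xb ball_ab ge0b lt_ba not_edge.
have [lt_left lt_right] := marks_between_split Xz lt_bz lt_za.
have ge0z : 0 <= z.2 by exact: le_trans ge0b (ltW lt_bz).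
have [p1 path_az] : exists p, dpath a p z.
  by apply: IHk => //; exact: leq_trans lt_right count_ab.
have [p2 path_zb] : exists p, dpath z p b.
  by apply: IHk => //; exact: leq_trans lt_left count_ab.
by exists (p1 ++ p2); apply: dpath_cat path_az path_zb.
Qed.

End DirectedPaths.

Theorem lemma5p2 (R : realType) (d n : nat) (X : seq (mpt R d))
    (x y : mpt R d) (m : nat) :
  (2 <= d)%N -> (1 <= n)%N ->
  (forall z, z \in X -> in_fund n z.1 /\ 0 <= z.2) ->
  x \in X -> y \in X ->
  in_tball n x.1 x.2 y.1 -> 0 < y.2 -> y.2 < x.2 ->
  (1 <= m)%N ->
  chem_dist_gt n X x y m ->
  exists c : seq (mpt R d),
    [/\ all (fun z => z \in X) c, tdesc_chain n x c & (m < size (x :: c))%N].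
Proof.
move=> _ _ _ Xx Xy ball_xy gt0y lt_yx _ far_xy.
have [p path_xy] := exists_dpath n X Xx Xy ball_xy (ltW gt0y) lt_yx.
exists p; split; [exact: dpath_all_mem path_xy | exact: dpath_tdesc_chain path_xy |].
rewrite /= ltnS leqNgt; apply/negP => short_p.
by apply: far_xy; exists p; split; [exact: ltnW | exact: dpath_upath].
Qed.
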